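(* For integers $n\ge 1$ and $i\ge 0$, let $S_n(i):=\sum_{j=0}^{n} \frac{q^{ij}(q;q)_{n+j}}{(q^2;q^2)_j}$ (and similarly $S_{n-1}(i)$). Then \[ S_n(i)=S_{n-1}(i)-q^n S_{n-1}(i+1)+q^{in}(q;q^2)_n . \]
   Context: For integers $m,i\ge0$, $S_m(i):=\sum_{j=0}^{m} \frac{q^{ij}(q;q)_{m+j}}{(q^2;q^2)_j}$, a rational function of $q$. Here $(a;q)_0:=1$ and $(a;q)_n:=(1-a)(1-aq)\cdots(1-aq^{n-1})$ for $n\ge1$. *)

From HB Require Import structures.
From mathcomp Require Import all_boot all_order all_algebra.
From mathcomp Require Import fraction.
Set Implicit Arguments. Unset Strict Implicit. Unset Printing Implicit Defensive.
Import Order.TTheory GRing.Theory Num.Theory.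
Local Open Scope ring_scope.

Definition qpoch {R : comNzRingType} (a q : R) (n : nat) : R :=
  \prod_(k < n) (1 - a * q ^+ k).

Definition S {F : fieldType} (q : F) (m i : nat) : F :=
  \sum_(j < m.+1) q ^+ (i * j) * qpoch q q (m + j) / qpoch (q ^+ 2) (q ^+ 2) j.

Definition ratfun := {fraction {poly rat}}.
Definition qX : ratfun := tofrac ('X : {poly rat}).

(* Since (q;q)_(m+1+j) = (q;q)_(m+j) (1 - q^(m+1) q^j), each of the first m+1
   summands of S_(m+1)(i) splits into the j-th summand of S_m(i) minus q^(m+1)
   times the j-th summand of S_m(i+1).  The remaining summand j = m+1 equals
   q^(i(m+1)) (q;q^2)_(m+1), because (q;q)_(2k) = (q;q^2)_k (q^2;q^2)_k.  The
   divisions are harmless in Q(q), where no q^k with k > 0 equals 1. *)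

From HB Require Import structures.
From mathcomp Require Import all_boot all_order all_algebra.
From mathcomp Require Import fraction.
From mathcomp Require Import ring.
Local Open Scope ring_scope.
Import GRing.Theory.

Lemma qpochS (R : comNzRingType) (a q : R) n :
  qpoch a q n.+1 = qpoch a q n * (1 - a * q ^+ n).
Proof. by rewrite /qpoch big_ord_recr. Qed.

Lemma qpoch_addnn (R : comNzRingType) (a q : R) n :
  qpoch a q (n + n) = qpoch a (q ^+ 2) n * qpoch (a * q) (q ^+ 2) n.
Proof.
elim: n => [|n IHn]; first by rewrite /qpoch !big_ord0 mulr1.
rewrite addnS addSn !qpochS IHn -!exprM mul2n -addnn [q ^+ (n + n).+1]exprSr.
ring.
Qed.

Lemma S_summandS (F : fieldType) (q : F) m i j :
  q ^+ (i * j) * qpoch q q (m.+1 + j) =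
  q ^+ (i * j) * qpoch q q (m + j)
  - q ^+ m.+1 * (q ^+ (i.+1 * j) * qpoch q q (m + j)).
Proof.
rewrite addSn qpochS -exprS -addSn mulSn !exprD.
ring.
Qed.

Lemma S_recursion (F : fieldType) (q : F) n i :
  qpoch (q ^+ 2) (q ^+ 2) n.+1 != 0 ->
  S q n.+1 i = S q n i - q ^+ n.+1 * S q n i.+1
               + q ^+ (i * n.+1) * qpoch q (q ^+ 2) n.+1.
Proof.
move=> qpoch_neq0.
rewrite /S big_ord_recr /= mulr_sumr -sumrB; congr (_ + _).
  by apply: eq_bigr => j _; rewrite S_summandS !mulrA mulrBl.
by rewrite qpoch_addnn -expr2 mulrA mulfK.
Qed.

Lemma qX_expr_neq1 k : (0 < k)%N -> qX ^+ k != 1.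
Proof.
move=> k_gt0; rewrite /qX -tofracXn -tofrac1 tofrac_eq.
apply/eqP => /(congr1 (fun p : {poly rat} => size p)).
by rewrite size_polyXn size_poly1; case: k k_gt0.
Qed.

Lemma qpoch_qX2_neq0 n : qpoch (qX ^+ 2) (qX ^+ 2) n != 0.
Proof.
apply/prodf_neq0 => k _.
by rewrite subr_eq0 eq_sym -exprM -exprD qX_expr_neq1.
Qed.

Theorem lemma3p1 (n i : nat) : (1 <= n)%N ->
  S qX n i = S qX n.-1 i - qX ^+ n * S qX n.-1 i.+1
             + qX ^+ (i * n) * qpoch qX (qX ^+ 2) n.
Proof.
case: n => [//|n] _.
exact/S_recursion/qpoch_qX2_neq0.
Qed.
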